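(* Let $U^{B}_{g+2,n+2}$ be the set of planted unicellular maps of genus $g+2$ with $n+2$ $(np)$-edges that are of type (B) (defined below), and let $U_{g+1,n}$ be the set of planted unicellular maps of genus $g+1$ with $n$ $(np)$-edges. Then there is a bijection between $U^{B}_{g+2,n+2}$ and the disjoint union of $(2n+1)(n+1)$ copies of $U_{g+1,n}$; in particular $|U^{B}_{g+2,n+2}|=(n+1)(2n+1)\,|U_{g+1,n}|$.
   Context: A planted unicellular map is a triple $(H,\alpha,\gamma)$: $H$ a finite set of half-edges, $\alpha$ a fixed-point-free involution of $H$ (edges), $\gamma$ a single cyclic permutation of $H$ (face); vertices are cycles of $\sigma=\alpha\circ\gamma$; a distinguished half-edge $S_1$ with $\sigma(S_1)=S_1$ is the plant; the edge $\{S_1,\alpha(S_1)\}$ is the plant edge and the others are $(np)$-edges; genus $g$ satisfies $2-2g=V-E+1$. Maps are taken up to isomorphism. Put $R_1=\alpha(S_1)$ and let $<_\gamma$ be the linear order $R_1<_\gamma\gamma(R_1)<_\gamma\cdots<_\gamma S_1$. Let $v_1=(h^1,\dots,h^m)$ be the $\sigma$-cycle of $R_1$, with $h^1=R_1$, $h^{i+1}=\sigma(h^i)$. The map is of type (B) if $m\ge3$ and $\alpha(h^2)<_\gamma h^3<_\gamma h^2<_\gamma\alpha(h^3)$. *)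

From mathcomp Require Import all_boot all_fingroup.
Set Implicit Arguments. Unset Strict Implicit. Unset Printing Implicit Defensive.

Definition pmap (T : finType) := ({perm T} * {perm T} * T)%type.

Section PM.
Variable T : finType.
Implicit Types M : pmap T.

Definition pm_alpha M : {perm T} := M.1.1.
Definition pm_gamma M : {perm T} := M.1.2.
Definition pm_plant M : T := M.2.

(* sigma = alpha o gamma  (in mathcomp, (s * t) x = t (s x)) *)
Definition pm_sigma M : {perm T} := (pm_gamma M * pm_alpha M)%g.

Definition is_pmap M : bool :=
  [forall x, (pm_alpha M (pm_alpha M x) == x) && (pm_alpha M x != x)]
  && [forall x, forall y, y \in porbit (pm_gamma M) x]
  && (pm_sigma M (pm_plant M) == pm_plant M).

Definition nverts M : nat := #|porbits (pm_sigma M)|.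
Definition nedges : nat := #|T| %/ 2.

(* 2 - 2g = V - E + 1, i.e. V + 2g = E + 1 *)
Definition has_genus M (g : nat) : bool := nverts M + 2 * g == nedges + 1.

Definition pm_R1 M : T := pm_alpha M (pm_plant M).

(* position in the linear order <_gamma starting at R1 *)
Definition gpos M (x : T) : nat := findex (pm_gamma M) (pm_R1 M) x.

Definition typeB M : bool :=
  let s := pm_sigma M in
  let a := pm_alpha M in
  let h2 := s (pm_R1 M) in
  let h3 := s h2 in
  [&& 3 <= #|porbit s (pm_R1 M)|,
      gpos M (a h2) < gpos M h3,
      gpos M h3 < gpos M h2 &
      gpos M h2 < gpos M (a h3)].

Definition pm_iso : rel (pmap T) := fun M M' =>
  [exists phi : {perm T},
     [forall x, (phi (pm_alpha M x) == pm_alpha M' (phi x))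
             && (phi (pm_gamma M x) == pm_gamma M' (phi x))]
     && (phi (pm_plant M) == pm_plant M')].
End PM.

(* Half-edge set for maps with n (np)-edges, i.e. n+1 edges: 2(n+1) half-edges.
   Every planted map with n (np)-edges is isomorphic to one on this set. *)
Definition HE (n : nat) : finType := 'I_(n.+1).*2.

Definition Uraw (n g : nat) : {set pmap (HE n)} :=
  [set M | is_pmap M && has_genus M g].
Definition URawB (n g : nat) : {set pmap (HE n)} :=
  [set M | [&& is_pmap M, has_genus M g & typeB M]].

Definition Ucls (n g : nat) : {set {set pmap (HE n)}} :=
  equivalence_partition (@pm_iso (HE n)) (Uraw n g).
Definition UBcls (n g : nat) : {set {set pmap (HE n)}} :=
  equivalence_partition (@pm_iso (HE n)) (URawB n g).

From Pilot Require Import Defs.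
From mathcomp Require Import all_boot all_fingroup zify.
Set Implicit Arguments. Unset Strict Implicit. Unset Printing Implicit Defensive.

(* Up to isomorphism a planted unicellular map on {0, ..., K} has face x |-> x + 1 and plant K, so
   it is just a fixed-point-free involution A with A 0 = K, and type (B) says that a = A 1 and
   b = A (a + 1) satisfy 2 <= b < a.  Deleting the two edges {1, a} and {b, a + 1} and exchanging
   the face blocks [2, b - 1] and [b + 1, a - 1] gives a map with two edges fewer whose vertex
   permutation is the first-return map of the old one to the surviving half-edges; hence it has the
   same vertices and genus one less.  Conversely (b, a) and the smaller map determine the original,
   and for K = 2n + 5 there are C(2n + 2, 2) = (n + 1)(2n + 1) admissible pairs. *)

Lemma card_imset_eq_kernel (aT rT1 rT2 : finType) (f : aT -> rT1) (g : aT -> rT2) :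
  (forall x y, (f x == f y) = (g x == g y)) ->
  #|f @: [set: aT]| = #|g @: [set: aT]|.
Proof.
move=> fg_ker.
pose h (y : rT2) := if [pick x | g x == y] is Some x then Some (f x) else None.
have hg x : h (g x) = Some (f x).
  rewrite /h; case: pickP => [y /eqP gy|/(_ x)]; last by rewrite eqxx.
  by congr Some; apply/eqP; rewrite fg_ker gy.
have im_f : (Some \o f) @: [set: aT] = h @: (g @: [set: aT]).
  apply/setP=> z; apply/imsetP/imsetP => [[x _ ->]|[y /imsetP[x _ ->] ->]].
    by exists (g x); [apply: imset_f | rewrite hg].
  by exists x; rewrite ?inE ?hg.
rewrite -[LHS](card_imset _ (@Some_inj _)) -imset_comp im_f card_in_imset //.
move=> _ _ /imsetP[x _ ->] /imsetP[y _ ->]; rewrite !hg => -[] /eqP.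
by rewrite fg_ker => /eqP.
Qed.

Lemma card_equivalence_partition (T : finType) (R : rel T) (D N : {set T}) :
  {in D & &, equivalence_rel R} -> N \subset D ->
  (forall x, x \in D -> exists2 y, y \in N & R x y) ->
  {in N &, forall x y, R x y -> x = y} ->
  #|equivalence_partition R D| = #|N|.
Proof.
move=> eqR /subsetP sND reprN uniqN.
pose cls x := [set z in D | R x z].
have cls_eq x y : x \in D -> y \in D -> R x y -> cls x = cls y.
  move=> Dx Dy Rxy; apply/setP=> z; rewrite !inE.
  by case Dz: (z \in D); rewrite //= (eqR x y z).
have -> : equivalence_partition R D = cls @: N.
  apply/setP=> X; apply/imsetP/imsetP => [[x Dx ->]|[y /sND Dy ->]].
    have [y Ny Rxy] := reprN x Dx.
    by exists y => //; apply: cls_eq => //; apply: sND.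
  by exists y.
rewrite card_in_imset // => x y Nx Ny cls_xy; apply: uniqN => //.
have : y \in cls y by rewrite inE (sND y Ny) (eqR y y y) ?sND.
by rewrite -cls_xy inE => /andP[].
Qed.

Lemma exists_bijective_of_card (A B : finType) :
  #|A| = #|B| -> exists f : A -> B, bijective f.
Proof.
move=> AB.
exists (fun x => enum_val (cast_ord AB (enum_rank x))).
exists (fun y => enum_val (cast_ord (esym AB) (enum_rank y))).
  by move=> x /=; rewrite enum_valK cast_ordK enum_rankK.
by move=> y /=; rewrite enum_valK cast_ordKV enum_rankK.
Qed.

(** * First-return maps *)

Section FirstReturn.
Variables (T T' : finType) (s : {perm T}) (s' : {perm T'}) (e : T' -> T).
Hypothesis e_inj : injective e.
Hypothesis first_return : forall w, exists k, [/\ 0 < k, iter k s (e w) = e (s' w) &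
   forall i, 0 < i < k -> iter i s (e w) \notin codom e].
Hypothesis reach_codom : forall x, exists j, iter j s x \in codom e.

Lemma porbit_first_return w : porbit s (e (s' w)) = porbit s (e w).
Proof. by have [k [_ <- _]] := first_return w; rewrite -permX porbit_perm. Qed.

Lemma porbit_iter_first_return w j : porbit s (e (iter j s' w)) = porbit s (e w).
Proof. by elim: j => [|j IHj] //=; rewrite porbit_first_return. Qed.

Lemma mem_porbit_first_return i w w' : iter i s (e w) = e w' -> w' \in porbit s' w.
Proof.
elim/ltn_ind: i w => i IHi w iw.
have [k [k_gt0 kw k_min]] := first_return w.
have [i_lt_k|k_le_i] := ltnP i k.
  have [i0|i_gt0] := posnP i.
    by move: iw; rewrite i0 => /e_inj ->; apply: porbit_id.
  by move: (k_min i); rewrite i_gt0 i_lt_k iw codom_f => /(_ isT).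
have : w' \in porbit s' (s' w).
  by apply: (IHi (i - k)); [lia | rewrite -kw -iterD subnK].
by rewrite -[porbit s' w](porbit_perm s' 1) expg1.
Qed.

Lemma card_porbits_first_return : #|porbits s| = #|porbits s'|.
Proof.
have -> : porbits s = (fun w => porbit s (e w)) @: [set: T'].
  apply/setP=> A; apply/imsetP/imsetP => [[x _ ->]|[w _ ->]]; last by exists (e w).
  have [j /codomP[w jw]] := reach_codom x.
  by exists w => //; rewrite -jw -permX porbit_perm.
have -> : porbits s' = porbit s' @: [set: T'].
  by apply/setP=> A; apply/imsetP/imsetP => [[x _ ->]|[w _ ->]]; [exists x|exists w].
apply: card_imset_eq_kernel => x y; rewrite !eq_porbit_mem; apply/idP/idP.
  case/porbitP=> i xi.
  by apply: (@mem_porbit_first_return i y x); rewrite -permX xi.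
by case/porbitP=> i ->; rewrite permX -eq_porbit_mem porbit_iter_first_return.
Qed.
End FirstReturn.

(** * Isomorphism classes and their normal form *)

Section Conjugation.
Variable T : finType.
Implicit Types (s t : {perm T}) (M : Defs.pmap T).

Lemma iter_permJ s t n x : iter n (s ^ t)%g (t x) = t (iter n s x).
Proof. by elim: n => [|n IHn] //=; rewrite IHn permJ. Qed.

Lemma porbit_permJ s t x : porbit (s ^ t)%g (t x) = t @: porbit s x.
Proof.
apply/setP=> y; apply/porbitP/imsetP => [[i ->]|[z /porbitP[i ->] ->]].
  by exists ((s ^+ i)%g x); rewrite ?mem_porbit // !permX iter_permJ.
by exists i; rewrite !permX iter_permJ.
Qed.

Lemma card_porbit_permJ s t x : #|porbit (s ^ t)%g (t x)| = #|porbit s x|.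
Proof. by rewrite porbit_permJ card_imset //; apply: perm_inj. Qed.

Lemma card_porbits_permJ s t : #|porbits (s ^ t)%g| = #|porbits s|.
Proof.
have -> : porbits (s ^ t)%g = (fun A : {set T} => t @: A) @: porbits s.
  apply/setP=> A; apply/imsetP/imsetP => [[x _ ->]|[B /imsetP[x _ ->] ->]].
    exists (porbit s (t^-1 x)%g); first exact: imset_f.
    by rewrite -porbit_permJ permKV.
  by exists (t x); rewrite ?porbit_permJ.
by rewrite card_imset //; apply/imset_inj/perm_inj.
Qed.

Lemma fconnect_permJ s t x y : fconnect (s ^ t)%g (t x) (t y) = fconnect s x y.
Proof.
apply/idP/idP => xy; last by rewrite -(iter_findex xy) -iter_permJ fconnect_iter.
by have := iter_findex xy; rewrite iter_permJ => /perm_inj <-; apply: fconnect_iter.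
Qed.

Lemma order_permJ s t x : fingraph.order (s ^ t)%g (t x) = fingraph.order s x.
Proof.
rewrite /fingraph.order -[RHS](card_image (@perm_inj _ t)); apply: eq_card => y.
rewrite -[y](permKV t) mem_image; last exact: perm_inj.
by rewrite !inE fconnect_permJ.
Qed.

Lemma traject_permJ s t n x : traject (s ^ t)%g (t x) n = map t (traject s x n).
Proof. by elim: n x => [|n IHn] x //=; rewrite permJ IHn. Qed.

Lemma findex_permJ s t x y : findex (s ^ t)%g (t x) (t y) = findex s x y.
Proof.
rewrite /findex /fingraph.orbit order_permJ traject_permJ index_map //.
exact: perm_inj.
Qed.

Definition pm_conj M t : Defs.pmap T :=
  ((pm_alpha M ^ t)%g, (pm_gamma M ^ t)%g, t (pm_plant M)).

Lemma pm_sigma_conj M t : pm_sigma (pm_conj M t) = (pm_sigma M ^ t)%g.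
Proof. by rewrite /pm_sigma /= conjMg. Qed.

Lemma pm_isoP M M' : reflect (exists t, M' = pm_conj M t) (pm_iso M M').
Proof.
apply: (iffP existsP) => [[t /andP[/forallP tM /eqP tp]]|[t ->]]; last first.
  by exists t; rewrite eqxx andbT; apply/forallP=> x; rewrite /= !permJ !eqxx.
exists t; case: M' tM tp => [[a' g'] p'] /= tM tp.
rewrite /pm_conj -tp; congr (_, _, _); apply/permP => y;
  by rewrite -(permKV t y) permJ; case/andP: (tM (t^-1 y)%g) => /eqP ta /eqP tg; rewrite ?ta ?tg.
Qed.

Lemma pm_conj1 M : pm_conj M 1%g = M.
Proof. by case: M => [[a g] p]; rewrite /pm_conj /= !conjg1 perm1. Qed.

Lemma pm_conjM M t u : pm_conj (pm_conj M t) u = pm_conj M (t * u).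
Proof. by rewrite /pm_conj /= !conjgM permM. Qed.

Lemma pm_iso_equivalence : equivalence_rel (@pm_iso T).
Proof.
move=> M1 M2 M3; split; first by apply/pm_isoP; exists 1%g; rewrite pm_conj1.
case/pm_isoP=> t ->; apply/pm_isoP/pm_isoP => -[u ->].
  by exists (t^-1 * u)%g; rewrite pm_conjM mulKVg.
by exists (t * u)%g; rewrite pm_conjM.
Qed.

Lemma has_genus_conj M t g : has_genus (pm_conj M t) g = has_genus M g.
Proof. by rewrite /has_genus /nverts pm_sigma_conj card_porbits_permJ. Qed.

Lemma gpos_conj M t x : gpos (pm_conj M t) (t x) = gpos M x.
Proof. by rewrite /gpos /pm_R1 /= permJ findex_permJ. Qed.

Lemma typeB_conj M t : typeB (pm_conj M t) = typeB M.
Proof.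
rewrite /typeB pm_sigma_conj /pm_R1.
have -> : pm_alpha (pm_conj M t) = (pm_alpha M ^ t)%g by [].
by rewrite /= !permJ card_porbit_permJ !gpos_conj.
Qed.

Lemma is_pmap_conj_of M t : is_pmap M -> is_pmap (pm_conj M t).
Proof.
case/andP=> /andP[/forallP alphaM /forallP gammaM] /eqP sigmaM.
rewrite /is_pmap -andbA; apply/and3P; split.
- apply/forallP=> x; rewrite -(permKV t x) /= !permJ.
  have /andP[/eqP -> alpha_x] := alphaM (t^-1 x)%g.
  by rewrite eqxx (inj_eq (@perm_inj _ t)).
- apply/forallP=> x; apply/forallP=> y; rewrite /= -(permKV t x) porbit_permJ.
  by rewrite -(permKV t y) imset_f //; apply: (forallP (gammaM _)).
- by rewrite pm_sigma_conj /= permJ sigmaM.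
Qed.

Lemma is_pmap_conj M t : is_pmap (pm_conj M t) = is_pmap M.
Proof.
apply/idP/idP; last exact: is_pmap_conj_of.
by move/(is_pmap_conj_of (t^-1)%g); rewrite pm_conjM mulgV pm_conj1.
Qed.
End Conjugation.

Definition inj_or_id (T : finType) (f : T -> T) := if injectiveb f then f else id.

Lemma inj_or_id_inj (T : finType) (f : T -> T) : injective (inj_or_id f).
Proof. by rewrite /inj_or_id; case: (injectiveP f) => // _ x y. Qed.

Definition perm_of (T : finType) (f : T -> T) : {perm T} := perm (@inj_or_id_inj T f).

Lemma perm_ofE (T : finType) (f : T -> T) : injective f -> perm_of f =1 f.
Proof. by move=> f_inj x; rewrite permE /inj_or_id; case: (injectiveP f). Qed.

Section NormalForm.
Variable k : nat.
Local Notation T := 'I_k.+1.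
Implicit Types M : Defs.pmap T.

Definition ord_rot : {perm T} := perm (can_inj (@ordSK k.+1)).

Lemma ord_rotE x : val (ord_rot x) = x.+1 %% k.+1.
Proof. by rewrite permE. Qed.

Lemma iter_ord_rotE i x : val (iter i ord_rot x) = (x + i) %% k.+1.
Proof.
elim: i => [|i IHi] /=; first by rewrite addn0 modn_small.
by rewrite ord_rotE IHi -[_.+1]addn1 modnDml addn1 addnS.
Qed.

Lemma iter_ord_rot_max (y : T) : iter y.+1 ord_rot ord_max = y.
Proof. by apply: val_inj; rewrite iter_ord_rotE /= addnS -addSn modnDl modn_small. Qed.

Definition face_perm M : {perm T} :=
  perm_of (fun i : T => iter i (pm_gamma M) (pm_R1 M)).

Definition normal_form M := pm_conj M (face_perm M)^-1%g.

Section PlantedMap.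
Variable M : Defs.pmap T.
Hypothesis pmapM : is_pmap M.
Local Notation alpha := (pm_alpha M).
Local Notation gamma := (pm_gamma M).

Lemma pm_alphaK : involutive alpha.
Proof. by case/andP: pmapM => /andP[/forallP alphaM _] _ x; case/andP: (alphaM x) => /eqP. Qed.

Lemma gamma_plant : gamma (pm_plant M) = pm_R1 M.
Proof.
case/andP: pmapM => _ /eqP; rewrite /pm_sigma permM /pm_R1 => sigma_plant.
by rewrite -{2}sigma_plant pm_alphaK.
Qed.

Lemma fconnect_R1 y : fconnect gamma (pm_R1 M) y.
Proof.
case/andP: pmapM => /andP[_ /forallP /(_ (pm_R1 M)) /forallP /(_ y)] /porbitP[i ->] _.
by rewrite permX fconnect_iter.
Qed.

Lemma order_R1 : fingraph.order gamma (pm_R1 M) = k.+1.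
Proof.
rewrite /fingraph.order -[RHS](card_ord k.+1); apply: eq_card => y.
by rewrite [RHS]inE; apply: fconnect_R1.
Qed.

Lemma face_permE i : face_perm M i = iter i gamma (pm_R1 M).
Proof.
apply: perm_ofE => l m /= lm; apply: ord_inj.
have lt_order (j : T) : (j : nat) < fingraph.order gamma (pm_R1 M) by rewrite order_R1.
by rewrite -(findex_iter (lt_order l)) lm findex_iter.
Qed.

Lemma face_perm_max : face_perm M ord_max = pm_plant M.
Proof.
apply: (@perm_inj _ gamma); rewrite gamma_plant face_permE /= -iterS.
by have := iter_order (@perm_inj _ gamma) (pm_R1 M); rewrite order_R1.
Qed.

Lemma face_perm_rot i : face_perm M (ord_rot i) = gamma (face_perm M i).
Proof.
have := ltn_ord i; rewrite ltnS leq_eqVlt => /orP[/eqP i_max|i_lt].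
  have -> : ord_rot i = ord0 by apply: val_inj; rewrite ord_rotE i_max modnn.
  rewrite !face_permE /= -iterS.
  have -> : (i : nat).+1 = fingraph.order gamma (pm_R1 M) by rewrite order_R1 i_max.
  by rewrite (iter_order (@perm_inj _ gamma)).
by rewrite !face_permE ord_rotE modn_small.
Qed.

Lemma normal_form_gamma : pm_gamma (normal_form M) = ord_rot.
Proof.
apply/permP=> y; rewrite /normal_form /pm_conj /= -{1}(permK (face_perm M) y).
by rewrite permJ -face_perm_rot permK.
Qed.

Lemma normal_form_plant : pm_plant (normal_form M) = ord_max.
Proof. by rewrite /normal_form /pm_conj /= -face_perm_max permK. Qed.
End PlantedMap.

Lemma pm_iso_normal_eq M M' :
  pm_gamma M = ord_rot -> pm_plant M = ord_max ->
  pm_gamma M' = ord_rot -> pm_plant M' = ord_max -> pm_iso M M' -> M = M'.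
Proof.
move=> gM pM gM' pM' /pm_isoP[t defM'].
suff t1 : t = 1%g by rewrite defM' t1 pm_conj1.
have rotJ : (ord_rot ^ t)%g = ord_rot by rewrite -{1}gM -gM' defM'.
have t_max : t ord_max = ord_max by rewrite -{1}pM -pM' defM'.
apply/permP=> y.
by rewrite perm1 -{1}(iter_ord_rot_max y) -iter_permJ rotJ t_max iter_ord_rot_max.
Qed.

(* Every class contains exactly one map whose face is [ord_rot] and whose plant is [ord_max]. *)
Lemma card_pm_iso_classes (Q : pred (Defs.pmap T)) :
  (forall M t, Q (pm_conj M t) = Q M) ->
  #|equivalence_partition (@pm_iso _) [set M | is_pmap M && Q M]| =
  #|[set a : {perm T} | is_pmap (a, ord_rot, ord_max) && Q (a, ord_rot, ord_max)]|.
Proof.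
move=> Q_conj; set D := [set M | _].
pose N := [set M in D | (pm_gamma M == ord_rot) && (pm_plant M == ord_max)].
rewrite (@card_equivalence_partition _ _ D N).
- have -> : N = (fun a => (a, ord_rot, ord_max)) @: [set a : {perm T} |
     is_pmap (a, ord_rot, ord_max) && Q (a, ord_rot, ord_max)].
    apply/setP=> -[[a g] p]; rewrite !inE; apply/idP/imsetP => [|[a' a'P [-> -> ->]]].
      rewrite /pm_gamma /pm_plant /= => /and3P[DM /eqP gM /eqP pM].
      by exists a; rewrite -?gM -?pM // inE.
    by rewrite inE in a'P; rewrite a'P !eqxx.
  by rewrite card_imset // => a b [].
- by move=> M1 M2 M3 _ _ _; apply: pm_iso_equivalence.
- by apply/subsetP=> M; rewrite inE => /andP[].
- move=> M; rewrite inE => /andP[pmapM QM]; exists (normal_form M).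
    by rewrite !inE is_pmap_conj Q_conj pmapM QM normal_form_gamma // normal_form_plant // !eqxx.
  by apply/pm_isoP; eexists.
- move=> M M'; rewrite !inE => /and3P[_ /eqP gM /eqP pM] /and3P[_ /eqP gM' /eqP pM'].
  exact: pm_iso_normal_eq.
Qed.
End NormalForm.

(** * Deleting the two edges of a type (B) map *)

Definition fpf_involution (K : nat) (f : nat -> nat) :=
  forall x, x <= K -> [/\ f x <= K, f (f x) = x & f x != x].

(* The vertex permutation of the map on {0, ..., K} with edges [A] and face x |-> x + 1. *)
Definition nsigma (K : nat) (A : nat -> nat) (x : nat) := A (if x == K then 0 else x.+1).

Section Surgery.
Variables k b a : nat.
Hypothesis b_ge2 : 2 <= b.
Hypothesis b_lt_a : b < a.
Hypothesis a_le : a <= k.+2.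

(* Deleting the edges {1, a} and {b, a+1} from the face 0, 1, ..., k+4 leaves the face of a map
   with k+1 half-edges in which the blocks [2, b-1] and [b+1, a-1] are exchanged; [lift_pos w] is
   the old label of the half-edge at position [w] of that face. *)
Definition lift_pos w :=
  if w == 0 then 0 else if w <= a - b - 1 then w + b
  else if w <= a - 3 then w - (a - b - 1) + 1 else w + 4.
Definition drop_pos x :=
  if x == 0 then 0 else if x < b then x + (a - b - 1) - 1
  else if x < a then x - b else x - 4.
Definition removed x := [|| x == 1, x == b, x == a | x == a.+1].

Local Ltac pos_arith := rewrite /lift_pos /drop_pos /removed; repeat case: ifP; move=> *; lia.

Lemma lift_pos_le w : w <= k -> lift_pos w <= k.+4. Proof. pos_arith. Qed.
Lemma lift_pos_lt w : w < k -> lift_pos w < k.+4. Proof. pos_arith. Qed.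
Lemma lift_pos_kept w : ~~ removed (lift_pos w). Proof. pos_arith. Qed.
Lemma lift_posK w : drop_pos (lift_pos w) = w. Proof. pos_arith. Qed.
Lemma drop_pos_le x : x <= k.+4 -> ~~ removed x -> drop_pos x <= k. Proof. pos_arith. Qed.
Lemma drop_posK x : ~~ removed x -> lift_pos (drop_pos x) = x. Proof. pos_arith. Qed.
Lemma lift_pos0 : lift_pos 0 = 0. Proof. by []. Qed.
Lemma lift_pos_max : lift_pos k = k.+4. Proof. pos_arith. Qed.
Lemma drop_pos_max : drop_pos k.+4 = k. Proof. pos_arith. Qed.
Lemma lift_posS w : w < k -> w != 0 -> w != a - b - 1 -> w != a - 3 ->
  lift_pos w.+1 = (lift_pos w).+1.
Proof. pos_arith. Qed.

Lemma lift_pos_inj : injective lift_pos.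
Proof. exact: can_inj lift_posK. Qed.

Lemma removed_1 : removed 1. Proof. by rewrite /removed eqxx. Qed.
Lemma removed_b : removed b. Proof. by rewrite /removed eqxx orbT. Qed.
Lemma removed_a : removed a. Proof. by rewrite /removed eqxx !orbT. Qed.
Lemma removed_a1 : removed a.+1. Proof. by rewrite /removed eqxx !orbT. Qed.

Definition contract (A : nat -> nat) w := drop_pos (A (lift_pos w)).

Section Expand.
Variable C : nat -> nat.
Hypothesis C_fpf : fpf_involution k C.
Hypothesis C0 : C 0 = k.

Definition expand x :=
  if x == 1 then a else if x == a then 1 else if x == b then a.+1
  else if x == a.+1 then b else lift_pos (C (drop_pos x)).

Lemma expand_kept x : ~~ removed x -> expand x = lift_pos (C (drop_pos x)).
Proof. clear C_fpf C0; rewrite /removed /expand; repeat case: ifP; move=> * //; lia. Qed.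

Lemma expand1 : expand 1 = a. Proof. by []. Qed.
Lemma expand_a : expand a = 1.
Proof. clear C_fpf C0; rewrite /expand; repeat case: ifP; move=> *; lia. Qed.
Lemma expand_b : expand b = a.+1.
Proof. clear C_fpf C0; rewrite /expand; repeat case: ifP; move=> *; lia. Qed.
Lemma expand_a1 : expand a.+1 = b.
Proof. clear C_fpf C0; rewrite /expand; repeat case: ifP; move=> *; lia. Qed.

Lemma expand0 : expand 0 = k.+4.
Proof. by rewrite expand_kept ?C0 ?lift_pos_max // /removed; lia. Qed.

Lemma expand_fpf : fpf_involution k.+4 expand.
Proof.
move=> x x_le; have [x_rem|x_kept] := boolP (removed x).
  by case/or4P: x_rem => /eqP ->;
    do 2 rewrite ?expand1 ?expand_a ?expand_b ?expand_a1; split; lia.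
have [Cx_le CCx Cx_neq] := C_fpf (drop_pos_le x_le x_kept).
rewrite !expand_kept ?lift_pos_kept // lift_posK CCx drop_posK //.
split=> //; first exact: lift_pos_le.
by apply: contra Cx_neq => /eqP/(congr1 drop_pos); rewrite !lift_posK => ->.
Qed.

Lemma contract_expand w : contract expand w = C w.
Proof. by rewrite /contract expand_kept ?lift_pos_kept // !lift_posK. Qed.
End Expand.

Lemma eq_expand C1 C2 : (forall w, w <= k -> C1 w = C2 w) ->
  forall x, x <= k.+4 -> expand C1 x = expand C2 x.
Proof.
move=> C12 x x_le; have [x_rem|x_kept] := boolP (removed x).
  by case/or4P: x_rem => /eqP ->; rewrite ?expand1 ?expand_a ?expand_b ?expand_a1.
by rewrite !expand_kept // C12 // drop_pos_le.
Qed.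

Section Contract.
Variable A : nat -> nat.
Hypothesis A_fpf : fpf_involution k.+4 A.
Hypothesis A0 : A 0 = k.+4.
Hypothesis A1 : A 1 = a.
Hypothesis A_a1 : A a.+1 = b.

Local Notation sigma := (nsigma k.+4 A).

Lemma A_involutive x : x <= k.+4 -> A (A x) = x. Proof. by case/A_fpf. Qed.

Lemma A_a : A a = 1. Proof. by rewrite -A1 A_involutive //; lia. Qed.
Lemma A_b : A b = a.+1. Proof. by rewrite -A_a1 A_involutive //; lia. Qed.

Lemma removed_closed x : x <= k.+4 -> ~~ removed x -> ~~ removed (A x).
Proof.
move=> x_le; apply: contra => /or4P[] /eqP Ax; rewrite -(A_involutive x_le) Ax.
- by rewrite A1 removed_a.
- by rewrite A_b removed_a1.
- by rewrite A_a removed_1.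
- by rewrite A_a1 removed_b.
Qed.

Lemma A_lift_kept w : w <= k -> ~~ removed (A (lift_pos w)).
Proof. by move=> w_le; apply: removed_closed; [apply: lift_pos_le | apply: lift_pos_kept]. Qed.

Lemma lift_contract w : w <= k -> lift_pos (contract A w) = A (lift_pos w).
Proof. by move=> w_le; rewrite drop_posK // A_lift_kept. Qed.

Lemma contract_fpf : fpf_involution k (contract A).
Proof.
move=> w w_le; have lift_le := lift_pos_le w_le; split.
- by apply: drop_pos_le; [case: (A_fpf lift_le) | apply: A_lift_kept].
- by rewrite {1}/contract (lift_contract w_le) A_involutive // lift_posK.
- apply/eqP=> ww; have := lift_contract w_le; rewrite ww => /esym/eqP.
  by case: (A_fpf lift_le) => _ _ /negbTE ->.
Qed.

Lemma contract0 : contract A 0 = k.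
Proof. by rewrite /contract lift_pos0 A0 drop_pos_max. Qed.

Lemma expand_contract x : x <= k.+4 -> expand (contract A) x = A x.
Proof.
move=> x_le; have [x_rem|x_kept] := boolP (removed x).
  case/or4P: x_rem => /eqP ->;
  by rewrite ?expand1 ?expand_a ?expand_b ?expand_a1 ?A1 ?A_a ?A_b ?A_a1.
by rewrite expand_kept // /contract drop_posK // drop_posK // removed_closed.
Qed.

Lemma nsigmaE x : x < k.+4 -> sigma x = A x.+1.
Proof. by rewrite /nsigma; case: eqP => //; lia. Qed.

Definition first_return_to_kept x y := exists j, [/\ 0 < j, iter j sigma x = y &
  forall i, 0 < i < j -> removed (iter i sigma x)].

Lemma first_return_step x y : sigma x = y -> first_return_to_kept x y.
Proof. by move=> xy; exists 1; split=> // i; lia. Qed.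

Lemma first_return_cons x q y : sigma x = q -> removed q ->
  first_return_to_kept q y -> first_return_to_kept x y.
Proof.
move=> xq q_rem [j [j_gt0 qy j_min]]; exists j.+1; split=> //; first by rewrite iterSr xq.
move=> [|[|i]] // i_lt; first by rewrite /= xq.
by rewrite iterSr xq; apply: j_min; lia.
Qed.

Lemma first_return_kept x : x < k.+4 -> first_return_to_kept x (A x.+1).
Proof. by move/nsigmaE; apply: first_return_step. Qed.

Lemma first_return_a1 : first_return_to_kept a.+1 (A (lift_pos (a - 2))).
Proof.
have -> : lift_pos (a - 2) = a.+2 by pos_arith.
by apply: first_return_kept; lia.
Qed.

Lemma first_return_1 : first_return_to_kept 1 (A (lift_pos (a - b))).
Proof.
have [b_gt2|b_le2] := ltnP 2 b.
  have -> : lift_pos (a - b) = 2 by pos_arith.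
  exact: first_return_kept.
have b2 : b = 2 by lia.
have sigma1 : sigma 1 = a.+1 by rewrite nsigmaE // -b2 A_b.
by apply: (first_return_cons sigma1 removed_a1); rewrite b2; apply: first_return_a1.
Qed.

Lemma first_return_b : first_return_to_kept b (A (lift_pos 1)).
Proof.
have [b1_lt_a|a_le_b1] := ltnP b.+1 a.
  have -> : lift_pos 1 = b.+1 by pos_arith.
  by apply: first_return_kept; lia.
have ab : a = b.+1 by lia.
have sigma_b : sigma b = 1 by rewrite nsigmaE -?ab ?A_a //; lia.
apply: (first_return_cons sigma_b removed_1).
by have := first_return_1; rewrite ab subSnn.
Qed.

Lemma first_return_lift w : w <= k ->
  first_return_to_kept (lift_pos w) (lift_pos (nsigma k (contract A) w)).
Proof.
move=> w_le; have [->|w_neq_k] := eqVneq w k.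
  by apply: first_return_step; rewrite /nsigma !eqxx contract0 lift_pos_max eqxx A0.
have -> : nsigma k (contract A) w = contract A w.+1 by rewrite /nsigma (negbTE w_neq_k).
rewrite lift_contract; last by lia.
have [->|w_neq0] := eqVneq w 0.
  have sigma0 : sigma 0 = a by rewrite nsigmaE.
  have sigma_a : sigma a = b by rewrite nsigmaE //; lia.
  apply: (first_return_cons sigma0 removed_a).
  exact: (first_return_cons sigma_a removed_b first_return_b).
have [wq|w_neq_q] := eqVneq w (a - b - 1).
  have -> : lift_pos w = a.-1 by pos_arith.
  have sigma_a1 : sigma a.-1 = 1.
    by rewrite nsigmaE; [rewrite prednK ?A_a //; lia | lia].
  apply: (first_return_cons sigma_a1 removed_1).
  by rewrite (_ : w.+1 = a - b); [exact: first_return_1 | lia].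
have [wp|w_neq_p] := eqVneq w (a - 3).
  have -> : lift_pos w = b.-1 by pos_arith.
  have sigma_b1 : sigma b.-1 = a.+1.
    by rewrite nsigmaE; [rewrite prednK ?A_b //; lia | lia].
  apply: (first_return_cons sigma_b1 removed_a1).
  by rewrite (_ : w.+1 = a - 2); [exact: first_return_a1 | lia].
rewrite lift_posS //; last by lia.
by apply: first_return_kept; apply: lift_pos_lt; lia.
Qed.

Lemma first_return_reaches x y : first_return_to_kept x y -> ~~ removed y ->
  exists j, ~~ removed (iter j sigma x).
Proof. by case=> j [_ <- _]; exists j. Qed.

Lemma reaches_kept x : x <= k.+4 -> exists j, ~~ removed (iter j sigma x).
Proof.
move=> x_le; have [x_rem|x_kept] := boolP (removed x); last by exists 0.
have sigma_a : sigma a = b by rewrite nsigmaE //; lia.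
have kept w : w <= k -> ~~ removed (A (lift_pos w)) by apply: A_lift_kept.
case/or4P: x_rem => /eqP ->.
- by apply: (first_return_reaches first_return_1); apply: kept; lia.
- by apply: (first_return_reaches first_return_b); apply: kept; lia.
- apply: (first_return_reaches (first_return_cons sigma_a removed_b first_return_b)).
  by apply: kept; lia.
- by apply: (first_return_reaches first_return_a1); apply: kept; lia.
Qed.
End Contract.
End Surgery.

(** * Maps in normal form as involutions of {0, ..., K} *)

Lemma card_porbit_ge3 (T : finType) (s : {perm T}) x :
  uniq [:: x; s x; s (s x)] -> 3 <= #|porbit s x|.
Proof.
move=> uniq_x; have <- : #|[:: x; s x; s (s x)]| = 3 by rewrite (card_uniqP uniq_x).
apply/subset_leq_card/subsetP => y.
rewrite !inE => /or3P[] /eqP ->; first exact: porbit_id.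
  by have := mem_porbit s 1 x; rewrite permX.
by have := mem_porbit s 2 x; rewrite permX.
Qed.

Section NatEncoding.
Variable K : nat.
Implicit Types (al be : {perm 'I_K.+1}) (f : nat -> nat).

Definition natp al (x : nat) : nat := al (inord x).
Definition perm_of_nat f : {perm 'I_K.+1} := perm_of (fun x : 'I_K.+1 => inord (f x)).

Lemma natp_le al x : natp al x <= K.
Proof. by rewrite -ltnS /natp. Qed.

Lemma natpE al (y : 'I_K.+1) : al y = natp al y :> nat.
Proof. by rewrite /natp inord_val. Qed.

Lemma inordE x : x <= K -> (inord x : 'I_K.+1) = x :> nat.
Proof. by move=> x_le; rewrite inordK // ltnS. Qed.

Lemma natp_perm_of_nat f x : fpf_involution K f -> x <= K -> natp (perm_of_nat f) x = f x.
Proof.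
move=> f_fpf x_le; rewrite /natp /perm_of_nat perm_ofE.
  by rewrite inordE // inordE //; case: (f_fpf x).
have ord_le (y : 'I_K.+1) : y <= K by rewrite -ltnS.
have f_le (y : 'I_K.+1) : f y <= K by case: (f_fpf y (ord_le y)).
move=> y z /(congr1 val); rewrite /= !inordE ?f_le // => fyz; apply: ord_inj.
by case: (f_fpf y (ord_le y)) => _ <- _; rewrite fyz; case: (f_fpf z (ord_le z)).
Qed.

Lemma natp_inj al be : (forall x, x <= K -> natp al x = natp be x) -> al = be.
Proof.
by move=> albe; apply/permP => x; apply: ord_inj; rewrite /= !natpE albe // -ltnS ltn_ord.
Qed.

Lemma val_ord_rot (x : 'I_K.+1) : ord_rot K x = (if x == K :> nat then 0 else x.+1) :> nat.
Proof.
rewrite ord_rotE; case: eqP => [->|x_neq]; first by rewrite modnn.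
by rewrite modn_small //; have := ltn_ord x; lia.
Qed.

Lemma iter_ord_rot0 (x : 'I_K.+1) : iter x (ord_rot K) ord0 = x.
Proof. by apply: ord_inj; rewrite iter_ord_rotE add0n modn_small. Qed.

Lemma mem_porbit_ord_rot (x y : 'I_K.+1) : y \in porbit (ord_rot K) x.
Proof.
apply/porbitP; exists (y + K.+1 - x); rewrite permX; apply: ord_inj.
rewrite iter_ord_rotE (_ : x + _ = y + K.+1); last by have := ltn_ord x; lia.
by rewrite modnDr modn_small.
Qed.

Lemma sigma_normal al (x : 'I_K.+1) :
  pm_sigma (al, ord_rot K, ord_max) x = nsigma K (natp al) x :> nat.
Proof. by rewrite /pm_sigma permM /= natpE val_ord_rot. Qed.

Lemma iter_sigma_normal al j (x : 'I_K.+1) :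
  iter j (pm_sigma (al, ord_rot K, ord_max)) x = iter j (nsigma K (natp al)) x :> nat.
Proof. by elim: j => [|j IHj] //=; rewrite sigma_normal IHj. Qed.

Lemma is_pmap_normalP al :
  is_pmap (al, ord_rot K, ord_max) <-> fpf_involution K (natp al) /\ natp al 0 = K.
Proof.
have sigma_max : pm_sigma (al, ord_rot K, ord_max) ord_max = natp al 0 :> nat.
  by rewrite sigma_normal /nsigma eqxx.
split=> [|[al_fpf al0]].
  case/andP=> /andP[/forallP alK _] /eqP sigma_plant; split; last first.
    by rewrite -sigma_max sigma_plant.
  move=> x x_le; split; first exact: natp_le.
    by case/andP: (alK (inord x)) => /eqP alalx _; rewrite /natp inord_val alalx inordE.
  case/andP: (alK (inord x)) => _; apply: contra => /eqP alx.
  by apply/eqP/ord_inj; rewrite /= natpE inordK.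
rewrite /is_pmap -andbA; apply/and3P; split.
- apply/forallP => x; have [_ alalx alx] := al_fpf x (ltn_ord x).
  by rewrite -!(inj_eq (@ord_inj _)) /= !natpE alalx eqxx.
- by apply/forallP => x; apply/forallP => y; apply: mem_porbit_ord_rot.
- by rewrite -(inj_eq (@ord_inj _)) sigma_max al0.
Qed.

Lemma normal_alpha_max al : is_pmap (al, ord_rot K, ord_max) -> al ord_max = ord0.
Proof.
case/is_pmap_normalP => al_fpf al0; apply: ord_inj; rewrite /= natpE /=.
by have [_ alal0 _] := al_fpf 0 (leq0n K); rewrite al0 in alal0.
Qed.

Lemma gpos_normal al (x : 'I_K.+1) : is_pmap (al, ord_rot K, ord_max) ->
  gpos (al, ord_rot K, ord_max) x = x.
Proof.
move=> pmap_al; rewrite /gpos /pm_R1 /= normal_alpha_max //.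
have x_lt : (x : nat) < fingraph.order (ord_rot K) ord0.
  suff -> : fingraph.order (ord_rot K) ord0 = K.+1 by [].
  rewrite /fingraph.order -[RHS](card_ord K.+1); apply: eq_card => y.
  by rewrite [RHS]inE -(iter_ord_rot0 y); apply: fconnect_iter.
by have := findex_iter x_lt; rewrite iter_ord_rot0.
Qed.
End NatEncoding.

(* In normal form [h1 = 0], [h2 = alpha 1] and, when [h2 < K], [h3 = alpha (h2 + 1)], so condition
   (B) reads [1 < h3 < h2]; then [h2 + 1 < K] because [alpha K = 0], and [0], [h2], [h3] are
   distinct. *)
Lemma typeB_normal K (al : {perm 'I_K.+1}) : 0 < K -> is_pmap (al, ord_rot K, ord_max) ->
  typeB (al, ord_rot K, ord_max) =
  [&& 2 <= natp al (natp al 1).+1, natp al (natp al 1).+1 < natp al 1 & (natp al 1).+2 <= K].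
Proof.
move=> K_gt0 pmap_al; have [A_fpf A0] := (is_pmap_normalP al).1 pmap_al.
rewrite /typeB /pm_R1 /= !gpos_normal // normal_alpha_max //.
set s := pm_sigma _; set A := natp al; rewrite -/A in A_fpf A0.
have AK : A K = 0 by rewrite -{1}A0; case: (A_fpf 0 (leq0n K)).
have A11 : A (A 1) = 1 by case: (A_fpf 1 K_gt0).
have h2E : s ord0 = A 1 :> nat by rewrite sigma_normal /nsigma /= ifN // eq_sym -lt0n.
have h3E : s (s ord0) = nsigma K A (A 1) :> nat by rewrite sigma_normal h2E.
rewrite /pm_alpha /= !(natpE al) h3E h2E -/A A11 /nsigma.
have [A1K|A1_neq] := eqVneq (A 1) K.
  by rewrite A0 A1K ltnn !andbF /=; apply/esym/negbTE; lia.
have A1_lt : (A 1).+1 <= K by have := natp_le al 1; rewrite -/A; lia.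
have [_ Ab _] := A_fpf _ A1_lt; rewrite Ab ltnSn andbT.
have [b_gt1|] /= := boolP (1 < A (A 1).+1); last by rewrite andbF.
have [b_lt|] /= := boolP (A (A 1).+1 < A 1); last by rewrite andbF.
have A1_lt2 : (A 1).+2 <= K.
  by rewrite ltn_neqAle A1_lt andbT; apply: contraTneq b_gt1 => ->; rewrite AK.
rewrite A1_lt2 andbT; apply: card_porbit_ge3.
by rewrite /= !inE -!(inj_eq (@ord_inj _)) h2E h3E /nsigma (negbTE A1_neq) /=; lia.
Qed.

Section Count.
Variable k : nat.
Local Notation BT := 'I_(k.+4).+1.
Local Notation ST := 'I_k.+1.
Local Notation normal al := (al, ord_rot _, ord_max).
Implicit Types (al : {perm BT}) (be : {perm ST}) (t : 2.-tuple ST).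

Definition h2_of al := natp al 1.
Definition h3_of al := natp al (h2_of al).+1.
Definition small_alpha al : {perm ST} := perm_of_nat k (contract (h3_of al) (h2_of al) (natp al)).
Definition normal_typeB al := is_pmap (normal al) && typeB (normal al).

Lemma normal_typeB_facts al : normal_typeB al ->
  [/\ 2 <= h3_of al, h3_of al < h2_of al, h2_of al <= k.+2,
      fpf_involution k.+4 (natp al) & natp al 0 = k.+4].
Proof.
case/andP=> pmap_al; rewrite typeB_normal // => /and3P[b_ge2 b_lt_a a_le].
have [al_fpf al0] := (is_pmap_normalP al).1 pmap_al.
by split => //; rewrite /h2_of; lia.
Qed.

Section TypeBMap.
Variable al : {perm BT}.
Hypothesis typeB_al : normal_typeB al.
Let b := h3_of al.
Let a := h2_of al.
Let A := natp al.
Let b_ge2 : 2 <= b. Proof. by case: (normal_typeB_facts typeB_al). Qed.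
Let b_lt_a : b < a. Proof. by case: (normal_typeB_facts typeB_al). Qed.
Let a_le : a <= k.+2. Proof. by case: (normal_typeB_facts typeB_al). Qed.
Let A_fpf : fpf_involution k.+4 A. Proof. by case: (normal_typeB_facts typeB_al). Qed.
Let A0 : A 0 = k.+4. Proof. by case: (normal_typeB_facts typeB_al). Qed.
Let A1 : A 1 = a. Proof. by []. Qed.
Let A_a1 : A a.+1 = b. Proof. by []. Qed.

Lemma natp_small_alpha w : w <= k -> natp (small_alpha al) w = contract b a A w.
Proof. by move=> w_le; rewrite natp_perm_of_nat //; apply: contract_fpf. Qed.

Lemma is_pmap_small_alpha : is_pmap (normal (small_alpha al)).
Proof.
apply/is_pmap_normalP; split; last by rewrite natp_small_alpha // (contract0 b_ge2 b_lt_a a_le A0).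
move=> w w_le; have [cw_le ccw cw_neq] := contract_fpf b_ge2 b_lt_a a_le A_fpf A0 A1 A_a1 w_le.
by rewrite (natp_small_alpha w_le) natp_small_alpha.
Qed.

Definition lift_ord (w : ST) : BT := inord (lift_pos b a w).

Lemma lift_ordE (w : ST) : lift_ord w = lift_pos b a w :> nat.
Proof. by rewrite inordE // lift_pos_le // -ltnS. Qed.

Lemma lift_ord_inj : injective lift_ord.
Proof.
move=> w w' /(congr1 val); rewrite /= !lift_ordE => /(lift_pos_inj b_ge2 b_lt_a a_le) ww'.
exact: ord_inj.
Qed.

Lemma nverts_small_alpha : nverts (normal al) = nverts (normal (small_alpha al)).
Proof.
apply: (card_porbits_first_return lift_ord_inj) => [w|x].
  have w_le : (w : nat) <= k by rewrite -ltnS.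
  have [j [j_gt0 jw j_min]] := first_return_lift b_ge2 b_lt_a a_le A_fpf A0 A1 A_a1 w_le.
  exists j; split => //.
    apply: ord_inj; rewrite /= iter_sigma_normal !lift_ordE sigma_normal jw.
    congr (lift_pos b a _); rewrite /nsigma.
    case: eqP => [_|w_neq]; rewrite natp_small_alpha //.
    by have := ltn_ord w; lia.
  move=> i /j_min i_rem; apply/codomP => -[w' /(congr1 val)].
  rewrite /= iter_sigma_normal !lift_ordE => iw'.
  by move: i_rem; rewrite iw' (negbTE (lift_pos_kept b_ge2 b_lt_a a_le _)).
have x_le : (x : nat) <= k.+4 by rewrite -ltnS.
have [j j_kept] := reaches_kept b_ge2 b_lt_a a_le A_fpf A0 A1 A_a1 x_le.
exists j; apply/codomP; exists (inord (drop_pos b a (iter j (nsigma k.+4 A) x))).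
apply: ord_inj; rewrite lift_ordE iter_sigma_normal inordE ?(drop_posK b_ge2 b_lt_a a_le) //.
apply: (drop_pos_le b_ge2 b_lt_a a_le) => //; rewrite -iter_sigma_normal -ltnS; exact: ltn_ord.
Qed.

Lemma has_genus_small_alpha g :
  has_genus (normal al) g.+1 = has_genus (normal (small_alpha al)) g.
Proof.
rewrite /has_genus /nedges !card_ord nverts_small_alpha.
by apply/eqP/eqP; lia.
Qed.
End TypeBMap.

(* The pair [2 <= h3 < h2 <= k+2] is stored as the increasing pair [(h3 - 2, h2 - 2)] of
   ['I_k.+1]. *)
Definition pos_pair al : 2.-tuple ST := [tuple inord (h3_of al - 2); inord (h2_of al - 2)].
Definition pair_h3 t := tnth t ord0 + 2.
Definition pair_h2 t := tnth t (@Ordinal 2 1 isT) + 2.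

Definition typeB_encode al := (pos_pair al, small_alpha al).
Definition typeB_decode (x : 2.-tuple ST * {perm ST}) : {perm BT} :=
  perm_of_nat k.+4 (expand (pair_h3 x.1) (pair_h2 x.1) (natp x.2)).

Lemma typeB_encodeK al : normal_typeB al -> typeB_decode (typeB_encode al) = al.
Proof.
move=> typeB_al; have [b_ge2 b_lt_a a_le A_fpf A0] := normal_typeB_facts typeB_al.
have [C_fpf C0] := (is_pmap_normalP _).1 (is_pmap_small_alpha typeB_al).
rewrite /typeB_decode /=.
have -> : pair_h3 (pos_pair al) = h3_of al by rewrite /pair_h3 (tnth_nth ord0) /= inordE; lia.
have -> : pair_h2 (pos_pair al) = h2_of al by rewrite /pair_h2 (tnth_nth ord0) /= inordE; lia.
apply: natp_inj => x x_le; rewrite natp_perm_of_nat //; last exact: expand_fpf.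
rewrite (@eq_expand _ _ _ b_ge2 b_lt_a a_le _ (contract (h3_of al) (h2_of al) (natp al))) //.
  exact: (expand_contract b_ge2 b_lt_a a_le A_fpf A0).
by move=> w w_le; rewrite natp_small_alpha.
Qed.

Lemma sorted_pos_pair al : normal_typeB al -> sorted ltn (map val (pos_pair al)).
Proof. by case/normal_typeB_facts=> *; rewrite /= andbT !inordE; lia. Qed.

Lemma typeB_decodeK t be : sorted ltn (map val t) -> is_pmap (normal be) ->
  normal_typeB (typeB_decode (t, be)) /\ typeB_encode (typeB_decode (t, be)) = (t, be).
Proof.
move=> t_sorted pmap_be.
have [t0 [t1 def_t]] : exists t0 t1 : ST, t = [tuple t0; t1].
  exists (tnth t ord0), (tnth t (@Ordinal 2 1 isT)).
  by apply: eq_from_tnth => -[[|[|]] //= i2]; rewrite !(tnth_nth ord0).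
subst t; pose b := pair_h3 [tuple t0; t1]; pose a := pair_h2 [tuple t0; t1].
have b_ge2 : 2 <= b by rewrite /b /pair_h3; lia.
have b_lt_a : b < a by move: t_sorted; rewrite /b /a /pair_h3 /pair_h2 !(tnth_nth ord0) /=; lia.
have a_le : a <= k.+2 by rewrite /a /pair_h2 (tnth_nth ord0) /=; have := ltn_ord t1; lia.
have [C_fpf C0] := (is_pmap_normalP _).1 pmap_be.
set al := typeB_decode _.
have alE x : x <= k.+4 -> natp al x = expand b a (natp be) x.
  by move=> x_le; rewrite natp_perm_of_nat //; apply: (expand_fpf b_ge2 b_lt_a a_le).
have pmap_al : is_pmap (normal al).
  apply/is_pmap_normalP; split; last by rewrite alE // (expand0 b_ge2 b_lt_a a_le).
  move=> x x_le; have [ex_le eex ex_neq] := expand_fpf b_ge2 b_lt_a a_le C_fpf C0 x_le.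
  by rewrite (alE x x_le) alE.
have h2E : h2_of al = a by rewrite /h2_of alE // expand1.
have h3E : h3_of al = b by rewrite /h3_of h2E alE ?(expand_a1 b_ge2 b_lt_a a_le) //; lia.
have typeB_al : normal_typeB al.
  by rewrite /normal_typeB pmap_al typeB_normal // -/(h2_of al) -/(h3_of al) h2E h3E; lia.
split => //; congr (_, _).
  apply: eq_from_tnth => i; rewrite !(tnth_nth ord0) /= h2E h3E.
  by case: i => -[|[|//]] /= _; apply: ord_inj;
    rewrite inordE /b /a /pair_h3 /pair_h2 (tnth_nth ord0) /=;
    have := ltn_ord t0; have := ltn_ord t1; lia.
apply: natp_inj => w w_le.
rewrite natp_small_alpha // h3E h2E /contract alE ?(lift_pos_le b_ge2 b_lt_a a_le) //.
exact: (contract_expand b_ge2 b_lt_a a_le).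
Qed.

Lemma card_normal_typeB g :
  #|[set al : {perm BT} | is_pmap (normal al) && (has_genus (normal al) g.+1 && typeB (normal al))]|
  = 'C(k.+1, 2) * #|[set be : {perm ST} | is_pmap (normal be) && has_genus (normal be) g]|.
Proof.
rewrite -card_ltn_sorted_tuples -cardsX; set SB := [set al | _].
have SB_typeB al : al \in SB -> normal_typeB al by rewrite inE /normal_typeB => /and3P[-> _ ->].
have -> : setX [set t : 2.-tuple ST | sorted ltn (map val t)]
   [set be : {perm ST} | is_pmap (normal be) && has_genus (normal be) g] = typeB_encode @: SB.
  apply/setP => -[t be]; rewrite !inE /=; apply/idP/imsetP.
    case/andP => t_sorted /andP[pmap_be be_genus].
    have [typeB_al encodeK] := typeB_decodeK t_sorted pmap_be.
    exists (typeB_decode (t, be)); last by rewrite encodeK.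
    rewrite inE; case/andP: (typeB_al) => -> ->; rewrite andbT has_genus_small_alpha //.
    by rewrite -[small_alpha _]/((typeB_encode _).2) encodeK.
  case=> al al_SB [-> ->]; have typeB_al := SB_typeB _ al_SB.
  rewrite sorted_pos_pair // is_pmap_small_alpha //= -has_genus_small_alpha //.
  by move: al_SB; rewrite inE => /and3P[].
rewrite card_in_imset // => al al' /SB_typeB al_B /SB_typeB al'_B encode_eq.
by rewrite -(typeB_encodeK al_B) encode_eq typeB_encodeK.
Qed.
End Count.

Lemma card_Ucls n g :
  #|Ucls n g| = #|[set be : {perm 'I_(n.*2).+2} |
    is_pmap (be, ord_rot _, ord_max) && has_genus (be, ord_rot _, ord_max) g]|.
Proof. by apply: card_pm_iso_classes => M t; apply: has_genus_conj. Qed.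

Lemma card_UBcls n g :
  #|UBcls n.+2 g| = #|[set al : {perm 'I_((n.*2).+1).+4.+1} |
    is_pmap (al, ord_rot _, ord_max) &&
    (has_genus (al, ord_rot _, ord_max) g && typeB (al, ord_rot _, ord_max))]|.
Proof. by apply: card_pm_iso_classes => M t; rewrite has_genus_conj typeB_conj. Qed.

Lemma bin2_double_succ n : 'C((n.*2).+2, 2) = n.+1 * (2 * n).+1.
Proof.
have dbl : (n.*2).+2 * (n.*2).+2.-1 = (n.+1 * (2 * n).+1).*2 by rewrite -!muln2 /=; lia.
by rewrite bin2 dbl doubleK.
Qed.

Theorem proposition5p5 (g n : nat) :
  (exists f : {X | X \in UBcls n.+2 g.+2} ->
              ('I_((2 * n).+1 * n.+1) * {Y | Y \in Ucls n g.+1})%type,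
     bijective f)
  /\ #|UBcls n.+2 g.+2| = (n.+1 * (2 * n).+1) * #|Ucls n g.+1|.
Proof.
have card_UB : #|UBcls n.+2 g.+2| = (n.+1 * (2 * n).+1) * #|Ucls n g.+1|.
  by rewrite card_UBcls card_Ucls (card_normal_typeB (n.*2).+1 g.+1) bin2_double_succ.
split=> //; apply: exists_bijective_of_card.
by rewrite card_prod card_ord !card_sig card_UB (mulnC (2 * n).+1).
Qed.
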